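(* For every integer $n\ge 1$, $7 P_{n}^2= -3 P_{n-1}^2+2 P_{n}P_{n-1}-4P_{n+1}^{2}-2 P_{2 n}+2 P_{n} P_{n+1} +3 P_{2 n-1}+4 P_{2 n+1}$, where $P_k$ denotes the $k$-th Pell number.
   Context: The Pell numbers are defined by $P_0=0$, $P_1=1$, $P_k=2P_{k-1}+P_{k-2}$ for $k\ge 2$. *)

From Stdlib Require Import ZArith.
Open Scope Z_scope.

Fixpoint pell (k : nat) : Z :=
  match k with
  | O => 0
  | S O => 1
  | S ((S k'') as k') => 2 * pell k' + pell k''
  end.

(* The addition formula P_(m+n+1) = P_(m+1) P_(n+1) + P_m P_n expresses P_(2n-1), P_(2n)
   and P_(2n+1) through P_(n-1), P_n, P_(n+1); after substitution the claim is a
   polynomial identity in these three numbers. *)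
From Stdlib Require Import ZArith Lia.
Open Scope Z_scope.

Lemma pell_SS (k : nat) : pell (S (S k)) = 2 * pell (S k) + pell k.
Proof. reflexivity. Qed.

Lemma pell_add (m n : nat) :
  pell (m + S n) = pell (S m) * pell (S n) + pell m * pell n.
Proof.
  revert n; induction m as [|m IH]; intros n.
  - change (pell (S n) = 1 * pell (S n) + 0 * pell n); ring.
  - rewrite Nat.add_succ_comm, IH, !pell_SS; ring.
Qed.

Theorem proposition7p5 (n : nat) (hn : (1 <= n)%nat) :
  7 * pell n ^ 2 =
    - 3 * pell (n - 1) ^ 2 + 2 * pell n * pell (n - 1) - 4 * pell (n + 1) ^ 2
    - 2 * pell (2 * n) + 2 * pell n * pell (n + 1)
    + 3 * pell (2 * n - 1) + 4 * pell (2 * n + 1).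
Proof.
  destruct n as [|k]; [lia|].
  replace (S k - 1)%nat with k by lia.
  replace (S k + 1)%nat with (S (S k)) by lia.
  replace (2 * S k - 1)%nat with (k + S k)%nat by lia.
  replace (2 * S k)%nat with (S k + S k)%nat by lia.
  replace (S k + S k + 1)%nat with (S k + S (S k))%nat by lia.
  rewrite !pell_add; ring.
Qed.
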